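(* Let $F$ be the fractal percolation in $[0,1]^2$ with parameters $M\in\mathbb{N}_{\geq2}$ and $p>1/M^2$, $p\leq 1$, $D=\log(M^2p)/\log M$, $r=1/M$. Let $x$ be a point which is a common corner of four level-1 squares $J_1,J_2,J_3,J_4$ (so $x$ lies in the interior of $[0,1]^2$), numbered so that $J_1$ and $J_2$ intersect only in $x$. Define $$E_2:=2(M-1)^2\sum_{n=1}^\infty r^{nD}\mathbb{E}V_0(C_n^1\cap C_n^2),\quad E_3:=4(M-1)^2\sum_{n=1}^\infty r^{nD}\mathbb{E}V_0(C_n^1\cap C_n^2\cap C_n^3),$$ $$E_4:=(M-1)^2\sum_{n=1}^\infty r^{nD}\mathbb{E}V_0\Big(\bigcap_{j=1}^4C_n^j\Big).$$ Then $$E_2=2(M-1)^2\left(\frac{1}{M^2p-1}-\frac{2}{M^2-1}+\frac{p}{M^2-p}\right),$$ $$E_3=4(M-1)^2\left(\frac{1}{M^2p-1}-\frac{3}{M^2-1}+\frac{3p}{M^2-p}-\frac{p^2}{M^2-p^2}\right),$$ $$E_4=(M-1)^2\left(\frac{1}{M^2p-1}-\frac{4}{M^2-1}+\frac{6p}{M^2-p}-\frac{4p^2}{M^2-p^2}+\frac{p^3}{M^2-p^3}\right).$$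
   Context: Fractal percolation in $[0,1]^2$: $F_0=[0,1]^2$; given $F_{n-1}$, a union of closed grid squares of side $M^{-(n-1)}$, each is divided into $M^2$ closed subsquares of side $M^{-n}$, each kept independently (of everything else) with probability $p$; $F_n$ is the union of kept subsquares. The level-1 squares are the $M^2$ closed subsquares of $[0,1]^2$ of side $1/M$. For a level-1 square $J_j$, $C_n^j$ is the union of those level-$n$ grid squares (side $M^{-n}$) contained in $J_j$ that do not belong to $F_n$. $V_0$ is the Euler characteristic. *)

From HB Require Import structures.
From mathcomp Require Import all_boot all_order all_algebra.
From mathcomp Require Import all_classical all_reals all_analysis.
From Stdlib Require Import ClassicalEpsilon.
Set Implicit Arguments. Unset Strict Implicit. Unset Printing Implicit Defensive.
Import Order.TTheory GRing.Theory Num.Theory.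
Import numFieldNormedType.Exports.
Local Open Scope classical_set_scope.
Local Open Scope ring_scope.

Section FractalPercolation.
Variable R : realType.
Variable M : nat.

Definition grid_square (n i j : nat) : set (R * R) :=
  [set z | (i%:R / (M ^ n)%:R <= z.1 <= i.+1%:R / (M ^ n)%:R) /\
           (j%:R / (M ^ n)%:R <= z.2 <= j.+1%:R / (M ^ n)%:R)].

Definition is_corner1 (x : R * R) (a b : nat) : Prop :=
  exists (da db : bool), x = ((a + da)%:R / M%:R, (b + db)%:R / M%:R).

(* Index set of all the coins used up to level n: for each level k+1
   (k < n) and each level-(k+1) grid square (a, b). *)
Definition coin_index (n : nat) : finType :=
  {k : 'I_n & ('I_(M ^ k.+1) * 'I_(M ^ k.+1))%type}.

Definition config (n : nat) : finType := {ffun coin_index n -> bool}.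

Definition config_prob (p : R) (n : nat) (w : config n) : R :=
  \prod_(s : coin_index n) (if w s then p else 1 - p).

(* The level-n square (i, j) is kept, i.e. belongs to F_n: every one of its
   ancestors at levels 1..n (including itself) has been kept. *)
Definition kept (n : nat) (w : config n) (i j : nat) : Prop :=
  forall s : coin_index n,
    ((tagged s).1 : nat) = (i %/ M ^ (n - (tag s).+1))%N ->
    ((tagged s).2 : nat) = (j %/ M ^ (n - (tag s).+1))%N -> w s.

(* C_n^J : union of the level-n grid squares contained in the level-1
   square J = (a, b) that do not belong to F_n. *)
Definition Cset (n : nat) (w : config n) (J : 'I_M * 'I_M) : set (R * R) :=
  [set z | exists i j : nat, [/\ (i < M ^ n)%N, (j < M ^ n)%N,
       grid_square n i j `<=` grid_square 1 J.1 J.2,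
       ~ kept w i j & grid_square n i j z]].

Definition Exp (p : R) (n : nat) (X : config n -> R) : R :=
  \sum_(w : config n) config_prob p w * X w.

End FractalPercolation.

Section Euler.
Variable R : realType.

Definition convex_set2 (K : set (R * R)) : Prop :=
  forall a b, K a -> K b -> forall t : R, 0 <= t <= 1 ->
    K (t * a.1 + (1 - t) * b.1, t * a.2 + (1 - t) * b.2).

Definition polyconvex_rep (A : set (R * R)) (s : seq (set (R * R))) : Prop :=
  (forall K : set (R * R), K \in s -> compact K /\ convex_set2 K) /\
  A = [set z | exists2 K : set (R * R), K \in s & K z].

Definition euler_ie (s : seq (set (R * R))) : R :=
  \sum_(I : {set 'I_(size s)} | I != finset.set0)
     (-1) ^+ (#|I|.+1) *
     (asbool (exists z, forall i : 'I_(size s), i \in I -> nth set0 s i z))%:R.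

(* Euler characteristic V_0 on the convex ring (additive extension of the
   indicator of nonempty compact convex sets); 0 outside the convex ring. *)
Definition V0 (A : set (R * R)) : R :=
  if asbool (exists s, polyconvex_rep A s)
  then euler_ie (epsilon (inhabits [::]) (polyconvex_rep A))
  else 0.

End Euler.

From HB Require Import structures.
From mathcomp Require Import all_boot all_order all_algebra.
From mathcomp Require Import all_classical all_reals all_analysis.
From mathcomp Require Import ring zify.
From Stdlib Require Import ClassicalEpsilon.
Set Implicit Arguments. Unset Strict Implicit. Unset Printing Implicit Defensive.
Import Order.TTheory GRing.Theory Num.Theory.
Import numFieldNormedType.Exports.
Local Open Scope classical_set_scope.
Local Open Scope ring_scope.

(* Since J_1 and J_2 meet only in x, each intersection of the C_n^j is
   contained in {x}, so its Euler characteristic is the indicator of x.  The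
   corner x lies in C_n^j exactly when the level-n square of J_j at x is
   discarded, i.e. when not all n coins of its ancestor chain succeed; chains
   in different level-1 squares use disjoint coins, hence
   E V_0(C_n^1 ∩ ... ∩ C_n^m) = (1 - p^n)^m.  As r^(nD) = (M^2 p)^(-n),
   expanding (1 - p^n)^m binomially turns each series into a finite
   combination of geometric series. *)

Lemma prodr_nat_bool (R : comPzSemiRingType) (I : finType) (A : {pred I}) (b : I -> bool) :
  \prod_(i in A) ((b i)%:R : R) = ([forall i in A, b i])%:R.
Proof.
have [/forall_inP all_b | /forall_inPn [i iA /negbTE bi]] := boolP [forall i in A, b i].
  by rewrite big1 // => i /all_b ->.
by rewrite (bigD1 i iA) /= bi mul0r.
Qed.

Lemma sum_alternating_subsets (R : comPzRingType) (I : finType) (T : {set I}) :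
  \sum_(U : {set I} | U != finset.set0) (-1) ^+ #|U|.+1 * (U \subset T)%:R
  = (T != finset.set0)%:R :> R.
Proof.
have [/set0Pn [t tT] | /negPn/eqP ->] := boolP (T != finset.set0); last first.
  by rewrite big1 // => U; rewrite finset.subset0 => /negbTE ->; rewrite mulr0.
have vanish : \prod_(i : I) (- (i \in T)%:R + 1) = 0 :> R.
  by rewrite (bigD1 t) //= tT addNr mul0r.
have signed_term (U : {set I}) :
    \prod_i (if i \in U then - ((i \in T)%:R : R) else 1) = (-1) ^+ #|U| * (U \subset T)%:R.
  rewrite -big_mkcond prodrN prodr_nat_bool; congr (_ * (nat_of_bool _)%:R).
  by apply/forall_inP/fintype.subsetP.
rewrite bigA_distr (bigD1 finset.set0) //= signed_term cards0 finset.sub0set mul1r in vanish.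
under eq_bigr do rewrite exprS mulN1r mulNr -signed_term.
by rewrite sumrN; move/eqP: vanish; rewrite addrC addr_eq0 => /eqP ->; rewrite opprK.
Qed.

Section EulerPoint.
Variable R : realType.
Implicit Types (x : R * R) (A : set (R * R)) (s : seq (set (R * R))).

Lemma euler_ie_sub1 x s : (forall K, K \in s -> K `<=` [set x]) ->
  euler_ie s = (`[< exists2 K, K \in s & K x >])%:R.
Proof.
move=> s_x; pose T := [set i : 'I_(size s) | `[< nth set0 s i x >]]%SET.
have -> : `[< exists2 K, K \in s & K x >] = (T != finset.set0).
  apply/asboolP/set0Pn => [[K Ks Kx] | [i]].
    exists (Ordinal (etrans (index_mem K s) Ks)).
    by rewrite inE; apply/asboolP; rewrite /= nth_index.
  by rewrite inE => /asboolP Kx; exists (nth set0 s i) => //; exact: mem_nth.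
rewrite -sum_alternating_subsets; apply: eq_bigr => U _.
congr (_ * (nat_of_bool _)%:R); apply/asboolP/fintype.subsetP => [[z Uz] i iU | UT].
  have zx : z = x by apply: (s_x _ (mem_nth set0 (ltn_ord i))); exact: Uz.
  by rewrite inE; apply/asboolP; rewrite -zx; exact: Uz.
by exists x => i /UT; rewrite inE => /asboolP.
Qed.

Lemma convex_set2_set1 x : convex_set2 [set x].
Proof. by move=> a b -> -> t _; case: x => x1 x2 /=; congr pair; ring. Qed.

Lemma polyconvex_rep_sub1 x A : A `<=` [set x] ->
  polyconvex_rep A (if `[< A x >] then [:: [set x]] else [::]).
Proof.
move=> A_x; case: asboolP => [Ax | nAx]; split => //.
- by move=> K; rewrite inE => /eqP ->; split; [exact: compact_set1 | exact: convex_set2_set1].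
- apply/seteqP; split => [z Az | z [K]]; last by rewrite inE => /eqP -> ->.
  by exists [set x]; rewrite ?inE //; exact: A_x.
- by apply/seteqP; split => [z /[dup] /A_x -> // | z []].
Qed.

Lemma V0_sub1 x A : A `<=` [set x] -> V0 A = (`[< A x >])%:R.
Proof.
move=> A_x; have rep : exists s, polyconvex_rep A s.
  by exists (if `[< A x >] then [:: [set x]] else [::]); exact: polyconvex_rep_sub1.
rewrite /V0 (asboolT rep).
have [_ A_eq] := epsilon_spec (inhabits [::]) (polyconvex_rep A) rep.
set s := epsilon _ _ in A_eq *.
rewrite (euler_ie_sub1 (x := x)) => [|K Ks z Kz]; last by apply: A_x; rewrite A_eq; exists K.
by rewrite [in RHS]A_eq.
Qed.

End EulerPoint.

Section CoinMean.
Variables (R : realType) (S : finType) (p : R).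

(* [Exp] is [coin_mean] on the coins [coin_index M n]. *)
Definition coin_mean (X : {ffun S -> bool} -> R) : R :=
  \sum_(w : {ffun S -> bool}) (\prod_s (if w s then p else 1 - p)) * X w.

Lemma coin_meanZ c X : coin_mean (fun w => c * X w) = c * coin_mean X.
Proof. by rewrite /coin_mean big_distrr; apply: eq_bigr => w _; rewrite mulrCA. Qed.

Lemma coin_mean_sum (F : finType) (P : {pred F}) (X : F -> {ffun S -> bool} -> R) :
  coin_mean (fun w => \sum_(f in P) X f w) = \sum_(f in P) coin_mean (X f).
Proof. by rewrite /coin_mean; under eq_bigr do rewrite big_distrr; exact: exchange_big. Qed.

Lemma coin_mean_prod (g : S -> bool -> R) :
  coin_mean (fun w => \prod_s g s (w s)) = \prod_s (p * g s true + (1 - p) * g s false).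
Proof.
transitivity (\prod_s \sum_(b : bool) (if b then p else 1 - p) * g s b).
  by rewrite /coin_mean bigA_distr_bigA; apply: eq_bigr => w _; rewrite big_split.
by apply: eq_bigr => s _; rewrite big_bool.
Qed.

Lemma coin_mean_all (U : {set S}) :
  coin_mean (fun w => \prod_(s in U) (w s)%:R) = p ^+ #|U|.
Proof.
transitivity (coin_mean (fun w => \prod_s (if s \in U then (w s)%:R else 1))).
  by congr coin_mean; apply: funext => w; rewrite big_mkcond.
rewrite (coin_mean_prod (fun s b => if s \in U then b%:R else 1)).
rewrite -prodr_const [RHS]big_mkcond; apply: eq_bigr => s _.
by case: (s \in U) => /=; ring.
Qed.

Lemma coin_mean_all_blocks (I : finType) (P : pred I) (A : I -> {set S}) :
  (forall i j, P i -> P j -> i != j -> [disjoint A i & A j]%B) ->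
  coin_mean (fun w => \prod_(i | P i) \prod_(s in A i) (w s)%:R)
  = \prod_(i | P i) p ^+ #|A i|.
Proof.
move=> disjA; pose B i := if P i then A i else finset.set0.
have merge (F : S -> R) :
    \prod_(i | P i) \prod_(s in A i) F s = \prod_(s in (\bigcup_i B i)%SET) F s.
  rewrite partition_disjoint_bigcup => [|i j ij]; last first.
    rewrite /B; case: (boolP (P i)) => Pi; case: (boolP (P j)) => Pj;
      [exact: disjA Pi Pj ij | by rewrite -setI_eq0 ?finset.set0I ?finset.setI0 ..].
  by rewrite big_mkcond; apply: eq_bigr => i _; rewrite /B; case: (P i); rewrite ?big_set0.
transitivity (coin_mean (fun w => \prod_(s in (\bigcup_i B i)%SET) (w s)%:R)).
  by congr coin_mean; apply: funext => w; exact: merge.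
by rewrite coin_mean_all -prodr_const -merge; under eq_bigr do rewrite prodr_const.
Qed.

Lemma coin_mean_none_blocks (I : finType) (P : pred I) (A : I -> {set S}) :
  (forall i j, P i -> P j -> i != j -> [disjoint A i & A j]%B) ->
  coin_mean (fun w => \prod_(i | P i) (1 - \prod_(s in A i) (w s)%:R))
  = \prod_(i | P i) (1 - p ^+ #|A i|).
Proof.
move=> disjA.
(* Inclusion-exclusion: [f] selects the blocks contributing [- y i]. *)
have expand (y : I -> R) : \prod_(i | P i) (1 - y i) =
    \sum_(f in pffun_on false P predT)
      \prod_(i | P i && f i) (-1) * \prod_(i | P i && f i) y i.
  rewrite (eq_bigr (fun i => \sum_(b : bool) (if b then - y i else 1))); last first.
    by move=> i _; rewrite big_bool addrC.
  rewrite (big_distr_big false); apply: eq_bigr => f _.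
  rewrite -big_split big_mkcondr /=; apply: eq_bigr => i _.
  by case: (f i); rewrite ?mulN1r.
transitivity (coin_mean (fun w => \sum_(f in pffun_on false P predT)
   \prod_(i | P i && f i) (-1) * \prod_(i | P i && f i) \prod_(s in A i) (w s)%:R)).
  by congr coin_mean; apply: funext => w; exact: expand.
rewrite coin_mean_sum expand; apply: eq_bigr => f _.
rewrite coin_meanZ coin_mean_all_blocks // => i j /andP[Pi _] /andP[Pj _].
exact: disjA.
Qed.

End CoinMean.

Section Grid.
Variables (R : realType) (M : nat).
Hypothesis M_gt0 : (0 < M)%N.
Local Notation square := (@grid_square R M).

Lemma expM_gt0 n : (0 < M ^ n)%N.
Proof. by rewrite expn_gt0 M_gt0. Qed.

Lemma ler_natdiv2r (u v K : nat) : (0 < K)%N ->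
  (u%:R / K%:R <= v%:R / K%:R :> R) = (u <= v)%N.
Proof. by move=> K0; rewrite ler_pM2r ?invr_gt0 ?ltr0n // ler_nat. Qed.

Lemma coord_level1E (v n : nat) : v%:R / M%:R = (v * M ^ n)%:R / (M ^ n.+1)%:R :> R.
Proof.
have M0 : (M%:R : R) != 0 by rewrite pnatr_eq0 -lt0n.
have Mn0 : ((M ^ n)%:R : R) != 0 by rewrite pnatr_eq0 -lt0n expM_gt0.
by rewrite expnSr !natrM; field; rewrite M0 Mn0.
Qed.

Lemma ler_coord_level1 (u v n : nat) :
  (u%:R / (M ^ n.+1)%:R <= v%:R / M%:R :> R) = (u <= v * M ^ n)%N.
Proof. by rewrite (coord_level1E v n) ler_natdiv2r // expM_gt0. Qed.

Lemma ger_coord_level1 (u v n : nat) :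
  (v%:R / M%:R <= u%:R / (M ^ n.+1)%:R :> R) = (v * M ^ n <= u)%N.
Proof. by rewrite (coord_level1E v n) ler_natdiv2r // expM_gt0. Qed.

Lemma sub_square1P n i j a b :
  square n.+1 i j `<=` square 1 a b <->
  [/\ (a * M ^ n <= i < a.+1 * M ^ n)%N & (b * M ^ n <= j < b.+1 * M ^ n)%N].
Proof.
have step u : (u%:R / (M ^ n.+1)%:R <= u.+1%:R / (M ^ n.+1)%:R :> R).
  by rewrite ler_natdiv2r ?expM_gt0.
split => [sub | [/andP[ai ia] /andP[bj jb]] z].
  have [/andP[ai _] /andP[bj _]] :
      square 1 a b (i%:R / (M ^ n.+1)%:R, j%:R / (M ^ n.+1)%:R).
    by apply: sub; rewrite /grid_square /= !lexx !step.
  have [/andP[_ ia] /andP[_ jb]] :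
      square 1 a b (i.+1%:R / (M ^ n.+1)%:R, j.+1%:R / (M ^ n.+1)%:R).
    by apply: sub; rewrite /grid_square /= !lexx !step.
  move: ai bj ia jb; rewrite /= expn1.
  by rewrite !ger_coord_level1 !ler_coord_level1 => -> -> -> ->.
rewrite /grid_square /= expn1 => -[/andP[iz zi] /andP[jz zj]]; split; apply/andP; split.
- by apply: le_trans iz; rewrite ger_coord_level1.
- by apply: le_trans zi _; rewrite ler_coord_level1.
- by apply: le_trans jz; rewrite ger_coord_level1.
- by apply: le_trans zj _; rewrite ler_coord_level1.
Qed.

Lemma Cset_sub n (w : config M n) (K : 'I_M * 'I_M) :
  Cset w K `<=` square 1 K.1 K.2.
Proof. by move=> z [i [j [_ _ sub _ sq]]]; exact: sub. Qed.

(* Along one axis, the level-[n.+1] cell inside the level-1 cell [a] that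
   touches the grid line [a + da]. *)
Definition corner_cell (a : nat) (da : bool) (n : nat) : nat :=
  (if da then (a.+1 * M ^ n).-1 else a * M ^ n)%N.

Lemma corner_cellP a (da : bool) n i :
  [/\ (a * M ^ n <= i < a.+1 * M ^ n)%N & (i <= (a + da) * M ^ n <= i.+1)%N]
  <-> i = corner_cell a da n.
Proof.
have := expM_gt0 n; rewrite /corner_cell mulSn.
by case: da; rewrite ?addn1 ?addn0 ?mulSn => Mn0; split => [[]|->]; lia.
Qed.

Lemma corner_cell_divn a (da : bool) n : (corner_cell a da n %/ M ^ n)%N = a.
Proof.
have [/andP[ai ia] _] := proj2 (corner_cellP a da n _) erefl.
by apply/eqP; rewrite eqn_leq leq_divRL ?expM_gt0 // ai andbT -ltnS ltn_divLR ?expM_gt0.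
Qed.

Lemma corner_cell_lt (a : 'I_M) (da : bool) n : (corner_cell a da n < M ^ n.+1)%N.
Proof.
have [/andP[_ ia] _] := proj2 (corner_cellP a da n _) erefl.
by apply: leq_trans ia _; rewrite expnS leq_mul2r ltn_ord orbT.
Qed.

Lemma Cset_corner n (w : config M n.+1) (K : 'I_M * 'I_M) (da db : bool) :
  Cset (R:=R) w K ((K.1 + da)%:R / M%:R, (K.2 + db)%:R / M%:R) <->
  ~ kept w (corner_cell K.1 da n) (corner_cell K.2 db n).
Proof.
split => [[i [j [_ _ /sub_square1P [Ki Kj] not_kept]]] | not_kept].
  rewrite /grid_square /= ler_coord_level1 ger_coord_level1 ler_coord_level1.
  rewrite ger_coord_level1 => -[xi xj].
  by rewrite -(proj1 (corner_cellP _ _ _ _) (conj Ki xi)) -(proj1 (corner_cellP _ _ _ _) (conj Kj xj)).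
have [Ki xi] := proj2 (corner_cellP K.1 da n _) erefl.
have [Kj xj] := proj2 (corner_cellP K.2 db n _) erefl.
exists (corner_cell K.1 da n), (corner_cell K.2 db n); split => //.
- exact: corner_cell_lt.
- exact: corner_cell_lt.
- exact/sub_square1P.
- by rewrite /grid_square /= ler_coord_level1 ger_coord_level1 ler_coord_level1 ger_coord_level1.
Qed.

Definition ancestors (n i j : nat) : {set coin_index M n} :=
  [set s : coin_index M n | ((tagged s).1 == i %/ M ^ (n - (tag s).+1) :> nat)%N
        && ((tagged s).2 == j %/ M ^ (n - (tag s).+1) :> nat)%N]%SET.

Lemma keptE n (w : config M n) i j : kept w i j <-> [forall s in ancestors n i j, w s].
Proof.
split => [kept_ij | /forall_inP all_w s si sj].
  by apply/forall_inP => s; rewrite inE => /andP[/eqP si /eqP sj]; exact: kept_ij.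
by apply: all_w; rewrite inE si sj !eqxx.
Qed.

Lemma card_ancestors n i j : (i < M ^ n)%N -> (j < M ^ n)%N -> #|ancestors n i j| = n.
Proof.
move=> iM jM.
have anc_lt u (t : 'I_n) : (u < M ^ n)%N -> (u %/ M ^ (n - t.+1) < M ^ t.+1)%N.
  by move=> uM; rewrite ltn_divLR ?expM_gt0 // -expnD subnKC.
pose anc (t : 'I_n) : coin_index M n :=
  existT _ t (Ordinal (anc_lt i t iM), Ordinal (anc_lt j t jM)).
have -> : ancestors n i j = [set anc t | t : 'I_n]%SET.
  apply/setP => s; rewrite inE; apply/idP/imsetP => [|[t _ ->]]; last by rewrite /= !eqxx.
  case: s => t [u v] /= /andP[/eqP ut /eqP vt]; exists t => //.
  by rewrite /anc; congr existT; congr pair; apply: val_inj.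
by rewrite card_imset ?cardsT ?card_ord // => t1 t2 /(congr1 tag).
Qed.

Lemma ancestors_divn n i j s : s \in ancestors n.+1 i j ->
  ((tagged s).1 %/ M ^ tag s = i %/ M ^ n)%N /\ ((tagged s).2 %/ M ^ tag s = j %/ M ^ n)%N.
Proof.
rewrite inE => /andP[/eqP -> /eqP ->].
have tn : (tag s <= n)%N by rewrite -ltnS.
by rewrite -!divnMA -!expnD subSS subnK.
Qed.

End Grid.

Lemma powR_inv_ln_ratio (R : realType) (a Q : R) (n : nat) : 1 < a -> 0 < Q ->
  a^-1 `^ (n%:R * (ln Q / ln a)) = Q^-1 ^+ n.
Proof.
move=> a_gt1 Q_gt0; have a_gt0 : 0 < a by apply: lt_trans a_gt1.
have ln_a_gt0 : 0 < ln a by rewrite ln_gt0.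
rewrite mulrC powRrM powR_mulrn ?powR_ge0 //; congr (_ ^+ n).
rewrite /powR ifF; last by apply/negbTE; rewrite invr_eq0 gt_eqF.
rewrite lnV ?posrE // (_ : ln Q / ln a * - ln a = - ln Q); last by field; rewrite gt_eqF.
by rewrite expRN lnK // posrE.
Qed.

Lemma cvg_geometric_sum1 (R : realType) (q : R) : `|q| < 1 ->
  (\sum_(1 <= n < N) q ^+ n) @[N --> \oo] --> q / (1 - q).
Proof.
move=> q_lt1; rewrite -cvg_shiftS.
suff -> : (fun N => \sum_(1 <= n < N.+1) q ^+ n) = series (geometric q q).
  exact: cvg_geometric_series.
apply: funext => N; rewrite /series /= big_add1 /=.
by apply: eq_bigr => n _; rewrite exprS.
Qed.

Lemma cvg_sum_binomial_geometric (R : realType) (Q p : R) (m : nat) :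
  `|p| <= 1 -> 1 < `|Q| ->
  (\sum_(1 <= n < N) Q^-1 ^+ n * (1 - p ^+ n) ^+ m) @[N --> \oo] -->
  \sum_(j < m.+1) ((-1) ^+ j *+ 'C(m, j)) * (p ^+ j / (Q - p ^+ j)).
Proof.
move=> p_le1 Q_gt1; have normQ_gt0 : 0 < `|Q| by apply: lt_trans Q_gt1.
have pj_lt j : `|p ^+ j| < `|Q|.
  by rewrite normrX; apply: le_lt_trans Q_gt1; exact: exprn_ile1.
have -> : (fun N => \sum_(1 <= n < N) Q^-1 ^+ n * (1 - p ^+ n) ^+ m) =
    (fun N => \sum_(j < m.+1) ((-1) ^+ j *+ 'C(m, j)) *
                \sum_(1 <= n < N) (p ^+ j / Q) ^+ n).
  apply: funext => N.
  under eq_bigr do rewrite (addrC 1) exprD1n big_distrr /=.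
  rewrite exchange_big /=; apply: eq_bigr => j _; rewrite big_distrr /=.
  apply: eq_bigr => n _; rewrite mulrnAr mulrnAl; congr (_ *+ _).
  by rewrite (exprNn (p ^+ n) j) (exprMn _ (p ^+ j)) (exprAC p j n); ring.
apply: (cvg_big add_continuous) => j _.
apply: cvgMl_tmp; rewrite (_ : p ^+ j / (Q - p ^+ j) = p ^+ j / Q / (1 - p ^+ j / Q)).
  apply: cvg_geometric_sum1.
  by rewrite normrM normfV ltr_pdivrMr // mul1r.
have Q0 : Q != 0 by rewrite -normr_gt0.
have Qpj : Q - p ^+ j != 0.
  by rewrite subr_eq0; apply: contraTneq (pj_lt j) => ->; rewrite ltxx.
by field; rewrite Q0 Qpj.
Qed.

Section ClosedForms.
Variables (R : realType) (M : nat) (p : R).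
Hypothesis p_gt0 : 0 < p.

Lemma shifted_geometric_term j :
  p ^+ j.+1 / (M%:R ^+ 2 * p - p ^+ j.+1) = p ^+ j / (M%:R ^+ 2 - p ^+ j) :> R.
Proof.
rewrite exprS [_ * p]mulrC -mulrBr invfM mulrACA divff ?mul1r //; exact: lt0r_neq0.
Qed.

Lemma binomial_geometric_closed2 :
  \sum_(j < 3) ((-1) ^+ j *+ 'C(2, j)) * (p ^+ j / (M%:R ^+ 2 * p - p ^+ j)) =
  (M%:R ^+ 2 * p - 1)^-1 - 2 / (M%:R ^+ 2 - 1) + p / (M%:R ^+ 2 - p).
Proof.
rewrite big_ord_recl; under eq_bigr do rewrite lift0 shifted_geometric_term.
by rewrite !big_ord_recr big_ord0 /= !expr0 !expr1 !mul1r !binn bin1; ring.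
Qed.

Lemma binomial_geometric_closed3 :
  \sum_(j < 4) ((-1) ^+ j *+ 'C(3, j)) * (p ^+ j / (M%:R ^+ 2 * p - p ^+ j)) =
  (M%:R ^+ 2 * p - 1)^-1 - 3 / (M%:R ^+ 2 - 1) + 3 * p / (M%:R ^+ 2 - p)
  - p ^+ 2 / (M%:R ^+ 2 - p ^+ 2).
Proof.
rewrite big_ord_recl; under eq_bigr do rewrite lift0 shifted_geometric_term.
rewrite !big_ord_recr big_ord0 /= !expr0 !expr1 !mul1r !binn bin1.
by rewrite (_ : 'C(3, 2) = 3) //; ring.
Qed.

Lemma binomial_geometric_closed4 :
  \sum_(j < 5) ((-1) ^+ j *+ 'C(4, j)) * (p ^+ j / (M%:R ^+ 2 * p - p ^+ j)) =
  (M%:R ^+ 2 * p - 1)^-1 - 4 / (M%:R ^+ 2 - 1) + 6 * p / (M%:R ^+ 2 - p)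
  - 4 * p ^+ 2 / (M%:R ^+ 2 - p ^+ 2) + p ^+ 3 / (M%:R ^+ 2 - p ^+ 3).
Proof.
rewrite big_ord_recl; under eq_bigr do rewrite lift0 shifted_geometric_term.
rewrite !big_ord_recr big_ord0 /= !expr0 !expr1 !mul1r !binn bin1.
by rewrite (_ : 'C(4, 2) = 6) // (_ : 'C(4, 3) = 4) //; ring.
Qed.

End ClosedForms.

Section Corner.
Variables (R : realType) (M : nat) (p : R) (I : finType).
Variables (J : I -> 'I_M * 'I_M) (da db : I -> bool) (x : R * R).
Hypotheses (M_gt1 : (1 < M)%N) (J_inj : injective J).
Hypothesis x_corner :
  forall k, x = (((J k).1 + da k)%:R / M%:R, ((J k).2 + db k)%:R / M%:R).
Let M_gt0 : (0 < M)%N := ltnW M_gt1.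

Definition Cset_cap (s : seq I) n (w : config M n) : set (R * R) :=
  \big[setI/setT]_(k <- s) Cset w (J k).

Definition corner_block n k : {set coin_index M n.+1} :=
  ancestors M n.+1 (corner_cell M (J k).1 (da k) n) (corner_cell M (J k).2 (db k) n).

Lemma card_corner_block n k : #|corner_block n k| = n.+1.
Proof. by rewrite card_ancestors ?corner_cell_lt. Qed.

Lemma corner_block_disjoint n k l : k != l ->
  [disjoint corner_block n k & corner_block n l]%B.
Proof.
apply: contraNT => /pred0Pn [s /andP[sk sl]].
have [k1 k2] := ancestors_divn sk; have [l1 l2] := ancestors_divn sl.
rewrite !corner_cell_divn // in k1 k2 l1 l2.
apply/eqP/J_inj; move: (J k) (J l) k1 k2 l1 l2 => [a b] [a' b'] /= -> -> ha hb.
by congr pair; apply: val_inj.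
Qed.

Lemma Cset_corner_block n (w : config M n.+1) k :
  Cset w (J k) x <-> ~~ [forall s in corner_block n k, w s].
Proof. by rewrite (x_corner k) Cset_corner // keptE; split => /negP. Qed.

Lemma Exp_V0_corner_cap (s : seq I) n : uniq s ->
  (forall w : config M n.+1, Cset_cap s w `<=` [set x]) ->
  Exp p (fun w : config M n.+1 => V0 (Cset_cap s w)) = (1 - p ^+ n.+1) ^+ size s.
Proof.
move=> s_uniq cap_x.
have indicator (w : config M n.+1) : V0 (Cset_cap s w)
    = \prod_(k in s) (1 - \prod_(t in corner_block n k) (w t)%:R) :> R.
  have not_nat (b : bool) : 1 - b%:R = (~~ b)%:R :> R by case: b; rewrite ?subrr ?subr0.
  rewrite (V0_sub1 (cap_x w)) /Cset_cap -bigcap_seq.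
  under eq_bigr do rewrite prodr_nat_bool not_nat.
  rewrite prodr_nat_bool; congr (nat_of_bool _)%:R.
  apply/asboolP/forall_inP => [cap_w k ks | not_all k ks]; apply/Cset_corner_block.
    exact: cap_w.
  exact: not_all.
transitivity (coin_mean p (fun w => \prod_(k in s) (1 - \prod_(t in corner_block n k) (w t)%:R))).
  by apply: eq_bigr => w _; rewrite indicator.
rewrite coin_mean_none_blocks => [|k l _ _]; last exact: corner_block_disjoint.
under eq_bigr do rewrite card_corner_block.
by rewrite prodr_const (card_uniqP s_uniq).
Qed.

Hypotheses (p_gt0 : 0 < p) (p_le1 : p <= 1) (Mp_gt1 : 1 < M%:R ^+ 2 * p).

Lemma cvg_corner_cap_series (s : seq I) (k1 k2 : I)
    (S : forall n, config M n -> set (R * R)) :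
  uniq s -> k1 \in s -> k2 \in s ->
  grid_square M 1 (J k1).1 (J k1).2 `&` grid_square M 1 (J k2).1 (J k2).2 = [set x] ->
  (forall n (w : config M n), S n w = Cset_cap s w) ->
  (fun N => \sum_(1 <= n < N) M%:R^-1 `^ (n%:R * (ln (M%:R ^+ 2 * p) / ln M%:R))
              * Exp p (fun w => V0 (S n w))) @ \oo -->
  \sum_(j < (size s).+1) ((-1) ^+ j *+ 'C(size s, j)) * (p ^+ j / (M%:R ^+ 2 * p - p ^+ j)).
Proof.
move=> s_uniq k1s k2s meet_x S_cap.
have cap_x n (w : config M n) : Cset_cap s w `<=` [set x].
  rewrite /Cset_cap -bigcap_seq -meet_x => z cap_z.
  by split; apply: Cset_sub; [exact: cap_z k1 k1s | exact: cap_z k2 k2s].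
have M_gt1R : 1 < (M%:R : R) by rewrite ltr1n.
rewrite (_ : (fun N => _) = fun N => \sum_(1 <= n < N)
    (M%:R ^+ 2 * p)^-1 ^+ n * (1 - p ^+ n) ^+ size s); last first.
  apply: funext => N; apply: eq_big_nat => -[//|n] _.
  rewrite powR_inv_ln_ratio ?(lt_trans ltr01) // -(Exp_V0_corner_cap s_uniq (cap_x n.+1)).
  by congr (_ * Exp p _); apply: funext => w; rewrite S_cap.
apply: cvg_sum_binomial_geometric; first by rewrite ger0_norm // ltW.
by rewrite gtr0_norm // (lt_trans ltr01).
Qed.

End Corner.

Theorem lemma5p10 (R : realType) (M : nat) (p : R)
  (hM : (2 <= M)%N) (hp1 : 1 / (M%:R ^+ 2) < p) (hp2 : p <= 1)
  (x : R * R) (J : 'I_4 -> 'I_M * 'I_M)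
  (hJinj : injective J)
  (hcorner : forall k, is_corner1 M x (J k).1 (J k).2)
  (h12 : grid_square (R:=R) M 1 (J 0).1 (J 0).2 `&` grid_square (R:=R) M 1 (J 1).1 (J 1).2
         = [set x]) :
  let D := ln (M%:R ^+ 2 * p) / ln M%:R in
  let r := M%:R^-1 : R in
  let C := fun n (w : config M n) (k : 'I_4) => Cset (R:=R) w (J k) in
  [/\ (fun N : nat => 2 * (M%:R - 1) ^+ 2 * \sum_(1 <= n < N)
          r `^ (n%:R * D) * Exp p (fun w => V0 (C n w 0 `&` C n w 1)))
        @ \oo --> 2 * (M%:R - 1) ^+ 2 *
          ((M%:R ^+ 2 * p - 1)^-1 - 2 / (M%:R ^+ 2 - 1) + p / (M%:R ^+ 2 - p)),
      (fun N : nat => 4 * (M%:R - 1) ^+ 2 * \sum_(1 <= n < N)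
          r `^ (n%:R * D) * Exp p (fun w => V0 (C n w 0 `&` C n w 1 `&` C n w 2)))
        @ \oo --> 4 * (M%:R - 1) ^+ 2 *
          ((M%:R ^+ 2 * p - 1)^-1 - 3 / (M%:R ^+ 2 - 1) + 3 * p / (M%:R ^+ 2 - p)
           - p ^+ 2 / (M%:R ^+ 2 - p ^+ 2)) &
      (fun N : nat => (M%:R - 1) ^+ 2 * \sum_(1 <= n < N)
          r `^ (n%:R * D) *
          Exp p (fun w => V0 (C n w 0 `&` C n w 1 `&` C n w 2 `&` C n w 3)))
        @ \oo --> (M%:R - 1) ^+ 2 *
          ((M%:R ^+ 2 * p - 1)^-1 - 4 / (M%:R ^+ 2 - 1) + 6 * p / (M%:R ^+ 2 - p)
           - 4 * p ^+ 2 / (M%:R ^+ 2 - p ^+ 2) + p ^+ 3 / (M%:R ^+ 2 - p ^+ 3))].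
Proof.
move=> D r C.
have M2_gt0 : (0 : R) < M%:R ^+ 2 by rewrite exprn_gt0 // ltr0n ltnW.
have p_gt0 : 0 < p by apply: lt_trans hp1; rewrite divr_gt0.
have Mp_gt1 : 1 < M%:R ^+ 2 * p by rewrite mulrC -ltr_pdivrMr.
have /choice [d x_corner] : forall k, exists d : bool * bool,
    x = (((J k).1 + d.1)%:R / M%:R, ((J k).2 + d.2)%:R / M%:R).
  by move=> k; have [da [db ->]] := hcorner k; exists (da, db).
have series := cvg_corner_cap_series (da := fun k => (d k).1) (db := fun k => (d k).2)
  hM hJinj x_corner p_gt0 hp2 Mp_gt1 (k1 := 0) (k2 := 1).
split; [rewrite -binomial_geometric_closed2 // | rewrite -binomial_geometric_closed3 //
       | rewrite -binomial_geometric_closed4 //]; apply: cvgMl_tmp.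
- apply: (series [:: 0; 1] (fun n w => C n w 0 `&` C n w 1)) => // n w.
  by rewrite /Cset_cap !big_cons big_nil setIT.
- apply: (series [:: 0; 1; 2] (fun n w => C n w 0 `&` C n w 1 `&` C n w 2)) => // n w.
  by rewrite /Cset_cap !big_cons big_nil setIT !setIA.
- apply: (series [:: 0; 1; 2; 3] (fun n w => C n w 0 `&` C n w 1 `&` C n w 2 `&` C n w 3)) => // n w.
  by rewrite /Cset_cap !big_cons big_nil setIT !setIA.
Qed.
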